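(* Let $\gamma,\sigma:[a,b]\to V$ be continuous paths of bounded variation. Let $\phi:\mathbb{N}\cup\{0\}\to\mathbb{R}$ be such that both $|\phi|$ and $|\phi_{+1}|$ satisfy: $\sum_kC^k|\cdot|(k)(k!)^{-2}<\infty$ for every $C>0$, where $\phi_{+1}(k)=\phi(k+1)$. Then the $\phi$- and $\phi_{+1}$-signature kernels of $\gamma$ and $\sigma$ are well defined and, for all $(s,t)\in[a,b]^2$, \[ K_\phi^{\gamma,\sigma}(s,t)=\phi(0)+\int_a^s\int_a^tK_{\phi_{+1}}^{\gamma,\sigma}(u,v)\,\langle d\gamma_u,d\sigma_v\rangle. \]
   Context: $V$ is a finite-dimensional real inner product space, $\langle\cdot,\cdot\rangle_k$ the induced Hilbert–Schmidt inner product on $V^{\otimes k}$. Signature: $S(\gamma)^0=1$, $S(\gamma)^k_{s,t}=\int_{s<u_1<\dots<u_k<t}d\gamma_{u_1}\otimes\cdots\otimes d\gamma_{u_k}$. For $\phi$ real-valued, $K_\phi^{\gamma,\sigma}(s,t)=\sum_{k\ge0}\phi(k)\langle S(\gamma)^k_{a,s},S(\sigma)^k_{a,t}\rangle_k$. *)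

From HB Require Import structures.
From mathcomp Require Import all_boot all_order all_algebra.
From mathcomp Require Import all_classical all_reals all_analysis.
Set Implicit Arguments. Unset Strict Implicit. Unset Printing Implicit Defensive.
Import Order.TTheory GRing.Theory Num.Theory.
Import numFieldNormedType.Exports.
Local Open Scope classical_set_scope.
Local Open Scope ring_scope.

Section Defs.
Variables (R : realType) (d : nat).

(* V = R^d (row vectors) with the standard Euclidean inner product. *)
Definition dotV (u v : 'rV[R]_d) : R := \sum_(c < d) u 0 c * v 0 c.

Definition coordp (g : R -> 'rV[R]_d) (c : 'I_d) : R -> R := fun t => g t 0 c.

Definition tagged_partition (a b delta : R) (n : nat) (x xi : nat -> R) : Prop :=
  x 0%N = a /\ x n = b /\
  (forall i, (i < n)%N ->
     x i <= x i.+1 /\ x i <= xi i /\ xi i <= x i.+1 /\ x i.+1 - x i < delta).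

Definition RS_sum (f g : R -> R) (n : nat) (x xi : nat -> R) : R :=
  \sum_(i < n) f (xi i) * (g (x i.+1) - g (x i)).

Definition is_RS (f g : R -> R) (a b I : R) : Prop :=
  forall e : R, 0 < e -> exists2 delta : R, 0 < delta &
    forall n x xi, tagged_partition a b delta n x xi ->
      `|RS_sum f g n x xi - I| < e.

(* total version: the integral if it exists, 0 otherwise *)
Definition RSint (f g : R -> R) (a b : R) : R := xget 0 [set I | is_RS f g a b I].

(* For a word w = [:: i_1; ...; i_k],
   sig g s t w = \int_{s<u_1<...<u_k<t} dg^{i_1}_{u_1} ... dg^{i_k}_{u_k},
   i.e. the (i_1,...,i_k) coordinate of S(g)^k_{s,t}.
   sigrev works on the reversed word (outermost integral first). *)
Fixpoint sigrev (g : R -> 'rV[R]_d) (s : R) (w : seq 'I_d) (t : R) : R :=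
  match w with
  | [::] => 1
  | i :: w' => RSint (sigrev g s w') (coordp g i) s t
  end.

Definition sig (g : R -> 'rV[R]_d) (s t : R) (w : seq 'I_d) : R :=
  sigrev g s (rev w) t.

Definition sig_inner (g h : R -> 'rV[R]_d) (a s t : R) (k : nat) : R :=
  \sum_(w : k.-tuple 'I_d) sig g a s w * sig h a t w.

Definition sig_kernel_terms (phi : nat -> R) (g h : R -> 'rV[R]_d) (a s t : R)
  : nat -> R := fun k => phi k * sig_inner g h a s t k.

Definition sig_kernel (phi : nat -> R) (g h : R -> 'rV[R]_d) (a s t : R) : R :=
  limn (series (sig_kernel_terms phi g h a s t)).

Definition phi_shift (phi : nat -> R) : nat -> R := fun k => phi k.+1.

Definition growth_cond (psi : nat -> R) : Prop :=
  forall C : R, 0 < C ->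
    cvgn (series (fun k => C ^+ k * `|psi k| / ((k`!)%:R ^+ 2))).

Definition is_RS2 (F : R -> R -> R) (g h : R -> 'rV[R]_d) (a s c t I : R) : Prop :=
  forall e : R, 0 < e -> exists2 delta : R, 0 < delta &
    forall n x xi m y eta,
      tagged_partition a s delta n x xi ->
      tagged_partition c t delta m y eta ->
      `|\sum_(i < n) \sum_(j < m)
          F (xi i) (eta j) * dotV (g (x i.+1) - g (x i)) (h (y j.+1) - h (y j))
        - I| < e.

End Defs.

From HB Require Import structures.
From mathcomp Require Import all_boot all_order all_algebra.
From mathcomp Require Import all_classical all_reals all_analysis.
From mathcomp Require Import ring lra.
Set Implicit Arguments. Unset Strict Implicit. Unset Printing Implicit Defensive.
Import Order.TTheory GRing.Theory Num.Theory.
Import numFieldNormedType.Exports.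
Local Open Scope classical_set_scope.
Local Open Scope ring_scope.

(* Every integral is read as a limit along the filter of tagged partitions refined by
   mesh, so sums, products and bounds of integrals come from the general theory of
   limits.  One continuous nondecreasing control W (the total variations of all
   coordinates of both paths) dominates every increment.  Comparing two fine partitions
   through their common refinement shows that Riemann-Stieltjes sums of a uniformly
   continuous integrand are Cauchy; iterating, the signature coordinates exist and
   satisfy  sum_w |S(g)^w_{a,u}| <= W(u)^k / k!.  Hence the k-th kernel term is at most
   C^k |phi k| / (k!)^2, and the growth conditions make both kernel series converge
   uniformly on [a,b]^2.  Splitting off the last letter of each word shows that
   <S^(k+1)_{a,s}, S^(k+1)_{a,t}> is the double integral of <S^k_{a,u}, S^k_{a,v}> against
   <d gamma_u, d sigma_v>; summing against phi (k+1) and passing to the uniform limit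
   gives the identity. *)

Section Prelim.
Variable R : realType.

Lemma sumr_telescope_ord (w : nat -> R) n :
  \sum_(i < n) (w i.+1 - w i) = w n - w 0%N.
Proof. by rewrite -(big_mkord xpredT (fun i => w i.+1 - w i)) telescope_sumr. Qed.

Lemma cvg_sumr {T I : Type} (r : seq I) (F : set_system T) {FF : Filter F}
    (f : I -> T -> R) (l : I -> R) :
  (forall i, f i @ F --> l i) -> \sum_(i <- r) f i t @[t --> F] --> \sum_(i <- r) l i.
Proof. by move=> fl; apply: cvg_big => //; exact: add_continuous. Qed.

Lemma cvgr_le_frequently {T : Type} (F : set_system T) {FF : Filter F}
    (f : T -> R) (l B : R) :
  f @ F --> l -> (forall A, F A -> exists2 t, A t & f t <= B) -> l <= B.
Proof.
move=> fl HB; rewrite leNgt; apply/negP => Bl.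
have [t /= Bt ftB] := HB _ (cvgr_gt l fl B Bl).
by move: Bt; rewrite ltNge ftB.
Qed.

Lemma big_tuple_cons (T : finType) n (F : n.+1.-tuple T -> R) :
  \sum_(t : n.+1.-tuple T) F t = \sum_(c : T) \sum_(t : n.-tuple T) F [tuple of c :: t].
Proof.
rewrite pair_big /=.
rewrite (reindex (fun p : T * n.-tuple T => [tuple of p.1 :: p.2])) //=.
exists (fun t => (thead t, [tuple of behead t])).
  by move=> [x t] _ /=; rewrite theadE; congr (_, _); apply: val_inj.
by move=> t _; case: t / tupleP => x t /=; apply: val_inj; rewrite /= theadE.
Qed.

Lemma sum_mul_le_mul_sum (I : finType) (F G : I -> R) :
  (forall i, 0 <= F i) -> (forall i, 0 <= G i) ->
  \sum_i F i * G i <= (\sum_i F i) * (\sum_i G i).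
Proof.
move=> F0 G0; rewrite mulr_suml; apply: ler_sum => i _; apply: ler_wpM2l => //.
by rewrite (bigD1 i) //= lerDl; apply: sumr_ge0.
Qed.

Lemma exp_fact_increment_le (A B : R) k : 0 <= A -> A <= B ->
  A ^+ k / (k`!)%:R * (B - A) <= (B ^+ k.+1 - A ^+ k.+1) / (k.+1`!)%:R.
Proof.
move=> A0 AB; have kf0 : (k`!)%:R != 0 :> R by rewrite pnatr_eq0 -lt0n fact_gt0.
have k0 : k.+1%:R != 0 :> R by rewrite pnatr_eq0.
have incr : k.+1%:R * (A ^+ k * (B - A)) <= B ^+ k.+1 - A ^+ k.+1.
  have -> : k.+1%:R * (A ^+ k * (B - A)) = (B - A) * \sum_(i < k.+1) A ^+ k.
    by rewrite sumr_const card_ord -mulr_natr; ring.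
  rewrite subrXX ler_wpM2l ?subr_ge0 //; apply: ler_sum => i _.
  have ik : (i <= k)%N by rewrite -ltnS.
  rewrite -{1}(subnK ik) exprD ler_wpM2r ?exprn_ge0 //.
  by apply: lerXn2r => //; rewrite nnegrE //; lra.
rewrite factS natrM (_ : _ * (B - A) = k.+1%:R * (A ^+ k * (B - A)) / (k.+1%:R * (k`!)%:R)).
  by rewrite ler_wpM2r // invr_ge0 mulr_ge0.
by field; apply/andP.
Qed.

Lemma series_abs_cvg (u m : nat -> R) : (forall k, `|u k| <= m k) ->
  cvgn (series m) -> cvgn (series u).
Proof.
move=> um cm; apply: normed_cvg; apply: (series_le_cvg (v_ := m)) => // k.
  exact: normr_ge0.
exact: le_trans (normr_ge0 _) (um k).
Qed.

Lemma series_tail_abs_le (u m : nat -> R) N : (forall k, `|u k| <= m k) ->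
  cvgn (series m) -> `|limn (series u) - series u N| <= limn (series m) - series m N.
Proof.
move=> um cm; have cu := series_abs_cvg um cm; rewrite -subr_le0.
apply: (@cvgr_to_le _ \oo _ R
  (fun M => `|series u M - series u N| - (series m M - series m N))).
  by apply: cvgB; [apply: cvg_norm | ]; apply: cvgB => //; exact: cvg_cst.
exists N => // M /= NM; rewrite subr_le0 !sub_series NM.
by apply: le_trans (ler_norm_sum _ _ _) _; apply: ler_sum.
Qed.

Lemma cvg_uniform_approx {T : Type} (F : set_system T) {FF : Filter F}
    (A : T -> R) (A_ : nat -> T -> R) (L_ : nat -> R) (L : R) (eps : nat -> R) :
  (forall N, A_ N @ F --> L_ N) -> L_ @ \oo --> L -> eps @ \oo --> 0 ->
  (forall N, \forall x \near F, `|A x - A_ N x| <= eps N) -> A @ F --> L.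
Proof.
move=> AN LN eps0 unif; apply/cvgrPdist_lt => e e0.
have e30 : 0 < e / 3 by rewrite divr_gt0.
have [N1 _ HN1] := (cvgrPdist_lt _ _).1 LN _ e30.
have [N2 _ HN2] := (cvgrPdist_lt _ _).1 eps0 _ e30.
pose N := maxn N1 N2; have := HN1 N (leq_maxl _ _); have := HN2 N (leq_maxr _ _).
rewrite sub0r normrN => hN2 hN1.
apply: filterS2 (unif N) ((cvgrPdist_lt _ _).1 (AN N) _ e30) => x hA hAN.
have := ler_normD (L - L_ N) (L_ N - A_ N x + (A_ N x - A x)).
have := ler_normD (L_ N - A_ N x) (A_ N x - A x); rewrite distrC in hA.
have -> : L - L_ N + (L_ N - A_ N x + (A_ N x - A x)) = L - A x by ring.
have := ler_norm (eps N); lra.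
Qed.

End Prelim.

(** * Tagged partitions and the mesh filter *)

Section TaggedPartitions.
Variable R : realType.
Implicit Types (p q r dl : R) (n : nat) (x xi : nat -> R).

Lemma tagged_partition_pt_mono p q dl n x xi : tagged_partition p q dl n x xi ->
  forall i j, (i <= j <= n)%N -> x i <= x j.
Proof.
move=> [_ [_ H]] i j /andP[]; elim: j => [|j IH] ij jn.
  by move: ij; rewrite leqn0 => /eqP ->.
move: ij; rewrite leq_eqVlt => /orP[/eqP -> //|ij].
exact: le_trans (IH ij (ltnW jn)) (H j jn).1.
Qed.

Lemma tagged_partition_pt_in p q dl n x xi : tagged_partition p q dl n x xi ->
  forall i, (i <= n)%N -> p <= x i <= q.
Proof.
move=> P i iN; have [x0 [xn _]] := P.
by rewrite -[p]x0 -[q]xn !(tagged_partition_pt_mono P) // ?iN ?leqnn ?leq0n.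
Qed.

Lemma tagged_partition_tag_in p q dl n x xi : tagged_partition p q dl n x xi ->
  forall i, (i < n)%N -> p <= xi i <= q.
Proof.
move=> P i iN; have [_ [_ H]] := P; have [_ [h1 [h2 _]]] := H i iN.
have /andP[b1 _] := tagged_partition_pt_in P (ltnW iN).
have /andP[_ b2] := tagged_partition_pt_in P iN.
by apply/andP; split; lra.
Qed.

Lemma tagged_partition_mesh_le p q dl dl' n x xi : dl <= dl' ->
  tagged_partition p q dl n x xi -> tagged_partition p q dl' n x xi.
Proof.
move=> dd [h1 [h2 H]]; split => //; split => // i /H [t1 [t2 [t3 t4]]].
by split; [|split; [|split]]; lra.
Qed.

Record tpart := TPart { tp_len : nat; tp_pt : nat -> R; tp_tag : nat -> R }.

Definition fine_partition p q dl (P : tpart) :=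
  tagged_partition p q dl (tp_len P) (tp_pt P) (tp_tag P).

Definition partition_filter p q : set_system tpart :=
  filter_from [set dl | 0 < dl] (fun dl => [set P | fine_partition p q dl P]).

#[global] Instance partition_filter_filter p q : Filter (partition_filter p q).
Proof.
apply: filter_from_filter; first by exists 1; rewrite /= ltr01.
move=> d1 d2 d10 d20; exists (Num.min d1 d2); first by rewrite /= lt_min d10 d20.
by move=> P HP; split; apply: tagged_partition_mesh_le HP; rewrite ge_min lexx ?orbT.
Qed.

Definition uniform_tpart p q k : tpart :=
  let x i := p + i%:R * ((q - p) / k.+1%:R) in TPart k.+1 x x.

Lemma uniform_tpart_fine p q dl : p <= q -> 0 < dl ->
  exists k, fine_partition p q dl (uniform_tpart p q k).
Proof.
move=> pq dl0; set k := Num.truncn ((q - p) / dl); exists k.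
set h := (q - p) / k.+1%:R.
have h0 : 0 <= h by rewrite divr_ge0 // subr_ge0.
have hdl : h < dl.
  have := Num.Theory.truncnS_gt ((q - p) / dl).
  by rewrite /h ltr_pdivrMr // mulrC -ltr_pdivrMr.
split; first by rewrite /= mul0r addr0.
split; first by rewrite /= /h mulrCA divff ?mulr1 ?subrKC // pnatr_eq0.
move=> i _; rewrite /= -/h -natr1 mulrDl mul1r addrA.
by split; [|split; [|split]]; lra.
Qed.

Lemma partition_filter_proper p q : p <= q -> ProperFilter (partition_filter p q).
Proof.
move=> pq; apply: filter_from_proper => dl dl0.
by have [k Pk] := uniform_tpart_fine pq dl0; exists (uniform_tpart p q k).
Qed.

Definition cat_seq n (x y : nat -> R) i := if (i <= n)%N then x i else y (i - n)%N.

Definition cat_tags n (xi eta : nat -> R) i := if (i < n)%N then xi i else eta (i - n)%N.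

Definition tpart_cat (PQ : tpart * tpart) : tpart :=
  let: (P, Q) := PQ in
  TPart (tp_len P + tp_len Q) (cat_seq (tp_len P) (tp_pt P) (tp_pt Q))
    (cat_tags (tp_len P) (tp_tag P) (tp_tag Q)).

Lemma cat_seq_l n x y i : (i <= n)%N -> cat_seq n x y i = x i.
Proof. by rewrite /cat_seq => ->. Qed.

Lemma cat_seq_r n x y j : x n = y 0%N -> cat_seq n x y (n + j) = y j.
Proof.
rewrite /cat_seq => xy; case: leqP => [|_]; last by rewrite addKn.
by rewrite -{2}(addn0 n) leq_add2l leqn0 => /eqP ->; rewrite addn0.
Qed.

Lemma cat_tags_l n xi eta i : (i < n)%N -> cat_tags n xi eta i = xi i.
Proof. by rewrite /cat_tags => ->. Qed.

Lemma cat_tags_r n xi eta j : cat_tags n xi eta (n + j) = eta j.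
Proof. by rewrite /cat_tags ltnNge leq_addr /= addKn. Qed.

Lemma fine_partition_cat p r q dl P Q :
  fine_partition p r dl P -> fine_partition r q dl Q ->
  fine_partition p q dl (tpart_cat (P, Q)).
Proof.
case: P Q => n x xi [m y eta] [x0 [xn HP]] [y0 [ym HQ]].
rewrite /fine_partition /= in x0 xn HP y0 ym HQ *.
have xy : x n = y 0%N by rewrite xn y0.
split; first by rewrite cat_seq_l.
split; first by rewrite cat_seq_r.
move=> i im; case: (ltnP i n) => [lt_in|le_ni].
  by rewrite !cat_seq_l ?cat_tags_l ?(ltnW lt_in) //; apply: HP.
rewrite -(subnKC le_ni) -addnS !cat_seq_r // cat_tags_r; apply: HQ.
by rewrite -(ltn_add2l n) subnKC.
Qed.

Definition RS_sum_at (f g : R -> R) (P : tpart) : R :=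
  RS_sum f g (tp_len P) (tp_pt P) (tp_tag P).

Lemma RS_sum_at_cat p r q dl f g P Q :
  fine_partition p r dl P -> fine_partition r q dl Q ->
  RS_sum_at f g (tpart_cat (P, Q)) = RS_sum_at f g P + RS_sum_at f g Q.
Proof.
case: P Q => n x xi [m y eta] [_ [xn _]] [y0 _]; rewrite /= in xn y0.
have xy : x n = y 0%N by rewrite xn y0.
rewrite /RS_sum_at /RS_sum /= big_split_ord /=; congr (_ + _).
  apply: eq_bigr => i _; have le_in := ltnW (ltn_ord i).
  by rewrite !cat_seq_l ?cat_tags_l.
by apply: eq_bigr => j _; rewrite -addnS !cat_seq_r // cat_tags_r.
Qed.

Lemma is_RS_cvg f g p q I :
  is_RS f g p q I <-> RS_sum_at f g @ partition_filter p q --> I.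
Proof.
split=> [H|/cvgrPdist_lt H].
  apply/cvgrPdist_lt => e e0; have [dl dl0 Hdl] := H e e0.
  by exists dl => // P /Hdl; rewrite distrC.
move=> e e0; have [dl dl0 Hdl] := H e e0.
by exists dl => // n x xi hP; rewrite distrC; apply: (Hdl (TPart n x xi)).
Qed.

End TaggedPartitions.

(** * Riemann-Stieltjes integrals against a controlled integrator *)

Section RiemannStieltjes.
Variable R : realType.
Implicit Types (p q u v z lo hi dl e M : R) (f g W : R -> R).

Definition clamp lo hi z : R := if z <= lo then lo else if hi <= z then hi else z.

Lemma clamp_lo lo hi z : z <= lo -> clamp lo hi z = lo.
Proof. by rewrite /clamp => ->. Qed.

Lemma clamp_hi lo hi z : lo <= hi -> hi <= z -> clamp lo hi z = hi.
Proof.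
by move=> lh hz; rewrite /clamp hz; case: (leP z lo) => // zl; lra.
Qed.

Lemma clamp_in lo hi z : lo <= hi -> lo <= clamp lo hi z <= hi.
Proof.
by move=> lh; rewrite /clamp; case: (leP z lo); case: (leP hi z) => *; apply/andP; split; lra.
Qed.

Local Ltac case_ifs := repeat (case: ifP => [?|/negbT]; last rewrite -ltNge => ?).

Lemma clamp_mono lo hi z z' : lo <= hi -> z <= z' -> clamp lo hi z <= clamp lo hi z'.
Proof. by rewrite /clamp => *; case_ifs; lra. Qed.

Lemma clamp_incrementC f lo hi lo' hi' : lo <= hi -> lo' <= hi' ->
  f (clamp lo hi hi') - f (clamp lo hi lo') = f (clamp lo' hi' hi) - f (clamp lo' hi' lo).
Proof.
rewrite /clamp => *; case_ifs;
match goal with |- f ?A - f ?B = f ?C - f ?D =>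
  first [ by lra | by congr (f _ - f _); lra
        | by rewrite (_ : A = B); [rewrite (_ : C = D); [rewrite !subrr | lra] | lra] ]
end.
Qed.

Lemma sum_clamp_telescope f lo hi m (y : nat -> R) :
  lo <= hi -> y 0%N <= lo -> hi <= y m ->
  \sum_(j < m) (f (clamp lo hi (y j.+1)) - f (clamp lo hi (y j))) = f hi - f lo.
Proof.
move=> lh y0 ym.
by rewrite (sumr_telescope_ord (fun j => f (clamp lo hi (y j)))) (clamp_lo hi y0) clamp_hi.
Qed.

Lemma clamp_overlap lo hi lo' hi' : lo <= hi -> lo' <= hi' ->
  clamp lo hi lo' != clamp lo hi hi' -> lo' < hi /\ lo < hi'.
Proof.
move=> lh lh' hn; split; rewrite ltNge; apply/negP => h.
  by rewrite !clamp_hi ?eqxx // in hn; lra.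
by rewrite !clamp_lo ?eqxx // in hn; lra.
Qed.

(* the increment of [g] over the intersection of the [i]-th cell of [P] with the [j]-th
   cell of [Q]; it is 0 when the cells are disjoint *)
Definition meet_increment g (P Q : tpart R) i j :=
  g (clamp (tp_pt P i) (tp_pt P i.+1) (tp_pt Q j.+1)) -
  g (clamp (tp_pt P i) (tp_pt P i.+1) (tp_pt Q j)).

Definition controls p q g W :=
  forall u v, p <= u -> u <= v -> v <= q -> `|g v - g u| <= W v - W u.

Definition unif_cont_on p q f := forall e, 0 < e -> exists2 dl, 0 < dl &
  forall u v, p <= u -> u <= q -> p <= v -> v <= q -> `|u - v| < dl -> `|f u - f v| <= e.

Section Refinement.
Variables (p q dl : R) (P Q : tpart R).
Hypotheses (finP : fine_partition p q dl P) (finQ : fine_partition p q dl Q).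

Lemma RS_sum_at_meet_l f g : RS_sum_at f g P =
  \sum_(i < tp_len P) \sum_(j < tp_len Q) f (tp_tag P i) * meet_increment g P Q i j.
Proof.
apply: eq_bigr => i _; rewrite -mulr_sumr; congr (_ * _).
have [_ [_ HP]] := finP; have [Q0 [Qm _]] := finQ.
have /andP[+ _] := tagged_partition_pt_in finP (ltnW (ltn_ord i)).
have /andP[_ +] := tagged_partition_pt_in finP (ltn_ord i).
by rewrite -Q0 -Qm => *; rewrite sum_clamp_telescope //; apply: (HP i (ltn_ord i)).1.
Qed.

Lemma RS_sum_at_meet_r f g : RS_sum_at f g Q =
  \sum_(i < tp_len P) \sum_(j < tp_len Q) f (tp_tag Q j) * meet_increment g P Q i j.
Proof.
rewrite exchange_big; apply: eq_bigr => j _; rewrite -mulr_sumr; congr (_ * _).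
have [_ [_ HP]] := finP; have [_ [_ HQ]] := finQ; have [P0 [Pn _]] := finP.
rewrite /meet_increment.
under eq_bigr => i _ do
  rewrite clamp_incrementC ?(HP i (ltn_ord i)).1 ?(HQ j (ltn_ord j)).1 //.
have /andP[+ _] := tagged_partition_pt_in finQ (ltnW (ltn_ord j)).
have /andP[_ +] := tagged_partition_pt_in finQ (ltn_ord j).
by rewrite -P0 -Pn => *; rewrite sum_clamp_telescope //; apply: (HQ j (ltn_ord j)).1.
Qed.

Lemma sum_meet_increment W :
  \sum_(i < tp_len P) \sum_(j < tp_len Q) meet_increment W P Q i j = W q - W p.
Proof.
have [P0 [Pn _]] := finP.
transitivity (RS_sum_at (fun=> 1) W P).
  by rewrite RS_sum_at_meet_l; under [RHS]eq_bigr do under eq_bigr do rewrite mul1r.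
rewrite /RS_sum_at /RS_sum -P0 -Pn -(sumr_telescope_ord (fun i => W (tp_pt P i))).
by under eq_bigr do rewrite mul1r.
Qed.

Lemma meet_increment_term_le f g W e (i : 'I_(tp_len P)) (j : 'I_(tp_len Q)) :
  controls p q g W ->
  (forall u v, p <= u -> u <= q -> p <= v -> v <= q -> `|u - v| < dl + dl ->
     `|f u - f v| <= e) ->
  `|(f (tp_tag P i) - f (tp_tag Q j)) * meet_increment g P Q i j| <=
    e * meet_increment W P Q i j.
Proof.
move=> gW fe; have [_ [_ HP]] := finP; have [_ [_ HQ]] := finQ.
have [xi1 [t1 [t2 t3]]] := HP i (ltn_ord i); have [yj1 [t4 [t5 t6]]] := HQ j (ltn_ord j).
have /andP[xp _] := tagged_partition_pt_in finP (ltnW (ltn_ord i)).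
have /andP[_ xq] := tagged_partition_pt_in finP (ltn_ord i).
have /andP[yp _] := tagged_partition_pt_in finQ (ltnW (ltn_ord j)).
have /andP[_ yq] := tagged_partition_pt_in finQ (ltn_ord j).
have /andP[c1 c2] := clamp_in (tp_pt Q j) xi1.
have /andP[c3 c4] := clamp_in (tp_pt Q j.+1) xi1.
have cm := clamp_mono xi1 yj1.
rewrite /meet_increment.
have [->|hne] := eqVneq (clamp (tp_pt P i) (tp_pt P i.+1) (tp_pt Q j))
    (clamp (tp_pt P i) (tp_pt P i.+1) (tp_pt Q j.+1)).
  by rewrite !subrr mulr0 normr0 mulr0.
(* a nonzero meet increment forces the two cells to overlap, so the tags are 2 dl-close *)
have [lt1 lt2] := clamp_overlap xi1 yj1 hne.
rewrite normrM; apply: ler_pM => //; last by apply: gW; lra.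
by apply: fe; try lra; rewrite ltr_norml; apply/andP; split; lra.
Qed.

Lemma RS_sum_at_dist_le f g W e : controls p q g W ->
  (forall u v, p <= u -> u <= q -> p <= v -> v <= q -> `|u - v| < dl + dl ->
     `|f u - f v| <= e) ->
  `|RS_sum_at f g P - RS_sum_at f g Q| <= e * (W q - W p).
Proof.
move=> gW fe; rewrite (RS_sum_at_meet_l f g) (RS_sum_at_meet_r f g) -sumrB.
rewrite -(sum_meet_increment W) mulr_sumr.
apply: le_trans (ler_norm_sum _ _ _) _; apply: ler_sum => i _.
rewrite -sumrB mulr_sumr; apply: le_trans (ler_norm_sum _ _ _) _; apply: ler_sum => j _.
by rewrite -mulrBl; apply: meet_increment_term_le.
Qed.

End Refinement.

Lemma controls_ge0 p q g W u v : controls p q g W -> p <= u -> u <= v -> v <= q ->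
  0 <= W v - W u.
Proof. by move=> gW *; apply: le_trans (gW u v _ _ _). Qed.

Lemma controls_sub p q p' q' g W : p <= p' -> q' <= q ->
  controls p q g W -> controls p' q' g W.
Proof. by move=> h1 h2 H u v *; apply: H; lra. Qed.

Lemma unif_cont_on_sub p q p' q' f : p <= p' -> q' <= q ->
  unif_cont_on p q f -> unif_cont_on p' q' f.
Proof.
move=> h1 h2 H e e0; have [dl dl0 Hdl] := H e e0.
by exists dl => // u v *; apply: Hdl => //; lra.
Qed.

Lemma RS_sum_at_cvg p q f g W : p <= q -> controls p q g W -> unif_cont_on p q f ->
  cvg (RS_sum_at f g @ partition_filter p q).
Proof.
move=> pq gW fc; have PF := partition_filter_proper pq.
apply/cauchy_cvgP/cauchy_exP => e e0.
have Wpq := controls_ge0 gW (lexx p) pq (lexx q).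
have e'0 : 0 < e / 2 / (W q - W p + 1) by rewrite !divr_gt0 //; lra.
have [dl dl0 Hdl] := fc _ e'0.
have dl20 : 0 < dl / 2 by rewrite divr_gt0.
have [k Pk] := uniform_tpart_fine pq dl20.
exists (RS_sum_at f g (uniform_tpart p q k)), (dl / 2) => // P HP.
apply: le_lt_trans (RS_sum_at_dist_le Pk HP gW _) _.
  by move=> u v h1 h2 h3 h4 huv; apply: Hdl => //; rewrite [dl]splitr.
rewrite mulrAC ltr_pdivrMr; last lra.
by have := mulr_ge0 (ltW e0) Wpq; lra.
Qed.

Lemma is_RS_RSint p q f g W : p <= q -> controls p q g W -> unif_cont_on p q f ->
  is_RS f g p q (RSint f g p q).
Proof.
move=> pq gW fc; apply: xgetPex.
exists (lim (RS_sum_at f g @ partition_filter p q)); apply/is_RS_cvg.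
exact: RS_sum_at_cvg pq gW fc.
Qed.

Lemma RS_sum_at_abs_le p q dl f g W M P : controls p q g W ->
  (forall u, p <= u -> u <= q -> `|f u| <= M) -> fine_partition p q dl P ->
  `|RS_sum_at f g P| <= M * (W q - W p).
Proof.
move=> gW fM finP; have [P0 [Pn HP]] := finP.
rewrite -P0 -Pn -(sumr_telescope_ord (fun i => W (tp_pt P i))) mulr_sumr.
apply: le_trans (ler_norm_sum _ _ _) _; apply: ler_sum => i _.
have /andP[x1 _] := tagged_partition_pt_in finP (ltnW (ltn_ord i)).
have /andP[_ x2] := tagged_partition_pt_in finP (ltn_ord i).
have /andP[t1 t2] := tagged_partition_tag_in finP (ltn_ord i).
by rewrite normrM; apply: ler_pM => //; [apply: fM | apply: gW => //; apply: (HP i _).1].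
Qed.

Lemma is_RS_abs_le p q f g W M I : p <= q -> controls p q g W ->
  (forall u, p <= u -> u <= q -> `|f u| <= M) -> is_RS f g p q I ->
  `|I| <= M * (W q - W p).
Proof.
move=> pq gW fM /is_RS_cvg HI; have PF := partition_filter_proper pq.
apply: cvgr_to_le (cvg_norm HI) _.
by exists 1 => [|P finP]; [exact: ltr01 | apply: RS_sum_at_abs_le finP].
Qed.

Lemma is_RS_sub_abs_le p u v f g W M I1 I2 : p <= u -> u <= v -> controls p v g W ->
  (forall z, p <= z -> z <= v -> `|f z| <= M) ->
  is_RS f g p u I1 -> is_RS f g p v I2 -> `|I2 - I1| <= M * (W v - W u).
Proof.
move=> pu uv gW fM /is_RS_cvg H1 /is_RS_cvg H2.
have PF1 := partition_filter_proper pu; have PF2 := partition_filter_proper uv.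
pose G := filter_prod (partition_filter p u) (partition_filter u v).
have fine_cat dl : 0 < dl ->
    \forall PQ \near G, fine_partition p v dl (tpart_cat PQ) /\
      fine_partition p u dl PQ.1 /\ fine_partition u v dl PQ.2.
  move=> dl0; exists ([set P | fine_partition p u dl P], [set Q | fine_partition u v dl Q]).
    by split; exists dl.
  by move=> [P Q] [/= finP finQ]; split => //; apply: fine_partition_cat finP finQ.
(* along pairs (P, Q), the sums over the concatenation minus those over P are those over Q *)
have cat_cvg : @tpart_cat R @ G --> partition_filter p v.
  move=> A [dl dl0 HA]; apply: filterS (fine_cat dl dl0) => PQ [+ _]; exact: HA.
have H : RS_sum_at f g (tpart_cat PQ) - RS_sum_at f g PQ.1 @[PQ --> G] --> I2 - I1.
  by apply: cvgB; [exact: cvg_comp cat_cvg H2 | exact: cvg_comp cvg_fst H1].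
apply: cvgr_to_le (cvg_norm H) _.
apply: filterS (fine_cat 1 ltr01) => -[P Q] /= [_ [finP finQ]].
rewrite (RS_sum_at_cat _ _ finP finQ) addrC addKr.
by apply: RS_sum_at_abs_le finQ; [apply: controls_sub gW | move=> z *; apply: fM; lra].
Qed.

Definition bounded_lipschitz_wrt p q W f M :=
  (forall u, p <= u -> u <= q -> `|f u| <= M) /\
  (forall u v, p <= u -> u <= v -> v <= q -> `|f v - f u| <= M * (W v - W u)).

Lemma bounded_lipschitz_unif_cont p q W f M : p <= q ->
  bounded_lipschitz_wrt p q W f M -> unif_cont_on p q W -> unif_cont_on p q f.
Proof.
move=> pq [fM fL] Wc e e0; have M0 := le_trans (normr_ge0 _) (fM p (lexx p) pq).
have [dl dl0 Hdl] := Wc (e / (M + 1)) (divr_gt0 e0 (ltr_wpDl M0 ltr01)).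
exists dl => // u v h1 h2 h3 h4 huv; have HW := Hdl u v h1 h2 h3 h4 huv.
have fW : `|f u - f v| <= M * `|W u - W v|.
  case: (leP u v) => uv.
    by rewrite distrC; apply: le_trans (fL u v h1 uv h4) _; rewrite ler_wpM2l // distrC ler_norm.
  by apply: le_trans (fL v u h3 (ltW uv) h2) _; rewrite ler_wpM2l ?ler_norm.
apply: le_trans fW _; apply: le_trans (ler_wpM2l M0 HW) _.
by rewrite mulrCA ger_pMr // ler_pdivrMr ?mul1r; lra.
Qed.

Lemma RSint_bounded_lipschitz a b f g W M : a <= b -> controls a b g W ->
  unif_cont_on a b W -> bounded_lipschitz_wrt a b W f M ->
  bounded_lipschitz_wrt a b W (fun t => RSint f g a t) (M * (1 + (W b - W a))).
Proof.
move=> ab gW Wc fLip; have fc := bounded_lipschitz_unif_cont ab fLip Wc.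
have [fM _] := fLip; have M0 := le_trans (normr_ge0 _) (fM a (lexx a) ab).
have HI t : a <= t -> t <= b -> is_RS f g a t (RSint f g a t).
  move=> h1 h2; apply: is_RS_RSint h1 _ _.
    exact: controls_sub gW.
  exact: unif_cont_on_sub fc.
have fM' t : a <= t -> t <= b -> forall z, a <= z -> z <= t -> `|f z| <= M.
  by move=> *; apply: fM; lra.
split => [u h1 h2|u v h1 h2 h3].
  apply: le_trans
    (is_RS_abs_le h1 (controls_sub (lexx a) h2 gW) (fM' u h1 h2) (HI u h1 h2)) _.
  by rewrite ler_wpM2l //; have := controls_ge0 gW h1 h2 (lexx b); lra.
apply: le_trans (is_RS_sub_abs_le h1 h2 (controls_sub (lexx a) h3 gW)
  (fM' v (le_trans h1 h2) h3) (HI u h1 (le_trans h2 h3)) (HI v (le_trans h1 h2) h3)) _.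
rewrite -mulrA ler_wpM2l // ler_peMl ?(controls_ge0 gW h1 h2 h3) //.
by have := controls_ge0 gW (lexx a) ab (lexx b); lra.
Qed.

End RiemannStieltjes.

(** * Signatures of a controlled path *)

Section Signature.
Variables (R : realType) (d : nat).

Definition path_controls (a b : R) (g : R -> 'rV[R]_d) (W : R -> R) :=
  forall u v, a <= u -> u <= v -> v <= b ->
    \sum_(c < d) `|coordp g c v - coordp g c u| <= W v - W u.

Variables (a b : R) (g : R -> 'rV[R]_d) (W : R -> R).
Hypotheses (ab : a <= b) (Wc : unif_cont_on a b W) (W0 : W a = 0)
  (gW : path_controls a b g W).

Lemma coordp_controls c : controls a b (coordp g c) W.
Proof.
move=> u v h1 h2 h3; apply: le_trans (gW h1 h2 h3).
by rewrite (bigD1 c) //= lerDl; apply: sumr_ge0 => *.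
Qed.

Lemma control_le u v : a <= u -> u <= v -> v <= b -> W u <= W v.
Proof.
move=> h1 h2 h3; rewrite -subr_ge0; apply: le_trans (gW h1 h2 h3).
exact: sumr_ge0.
Qed.

Lemma control_ge0 u : a <= u -> u <= b -> 0 <= W u.
Proof. by move=> h1 h2; rewrite -W0; apply: control_le. Qed.

Lemma sigrev_bounded_lipschitz l : exists M, bounded_lipschitz_wrt a b W (sigrev g a l) M.
Proof.
elim: l => [|c l [M HM]].
  exists 1; split => [u _ _|u v h1 h2 h3] /=; first by rewrite normr1.
  by rewrite subrr normr0 mul1r subr_ge0; apply: control_le.
exists (M * (1 + (W b - W a))).
exact: RSint_bounded_lipschitz (coordp_controls c) Wc HM.
Qed.

Lemma sigrev_is_RS l c t : a <= t -> t <= b ->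
  is_RS (sigrev g a l) (coordp g c) a t (sigrev g a (c :: l) t).
Proof.
move=> h1 h2; have [M HM] := sigrev_bounded_lipschitz l.
apply: is_RS_RSint h1 (controls_sub (lexx a) h2 (coordp_controls c)) _.
exact: unif_cont_on_sub (bounded_lipschitz_unif_cont ab HM Wc).
Qed.

Lemma sum_RS_sum_sigrev_le k u dl n x : u <= b ->
  fine_partition a u dl (TPart n x x) ->
  (forall v, a <= v -> v <= b ->
     \sum_(w : k.-tuple 'I_d) `|sigrev g a w v| <= W v ^+ k / (k`!)%:R) ->
  \sum_(c < d) \sum_(w : k.-tuple 'I_d)
      `|RS_sum_at (sigrev g a w) (coordp g c) (TPart n x x)|
    <= W u ^+ k.+1 / (k.+1`!)%:R.
Proof.
move=> ub finP IH; have [/= x0 [/= xn HP]] := finP.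
have xin i : (i <= n)%N -> a <= x i /\ x i <= b.
  by move=> iN; have /= /andP[h1 h2] := tagged_partition_pt_in finP iN; split; lra.
apply: le_trans (_ : \sum_(c < d) \sum_(w : k.-tuple 'I_d) \sum_(i < n)
    `|sigrev g a w (x i)| * `|coordp g c (x i.+1) - coordp g c (x i)| <= _).
  apply: ler_sum => c _; apply: ler_sum => w _.
  by apply: le_trans (ler_norm_sum _ _ _) _; apply: ler_sum => i _; rewrite normrM.
under eq_bigr do rewrite exchange_big.
rewrite exchange_big /=.
under eq_bigr do under eq_bigr do rewrite -mulr_suml.
under eq_bigr do rewrite -mulr_sumr.
have -> : W u ^+ k.+1 = W (x n) ^+ k.+1 - W (x 0%N) ^+ k.+1.
  by rewrite xn x0 W0 expr0n subr0.
rewrite -(sumr_telescope_ord (fun i => W (x i) ^+ k.+1)) mulr_suml.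
apply: ler_sum => i _.
have [ia ib] := xin i (ltnW (ltn_ord i)); have [ia' ib'] := xin i.+1 (ltn_ord i).
have [xx _] := HP i (ltn_ord i).
apply: le_trans (exp_fact_increment_le k (control_ge0 ia ib) (control_le ia xx ib')).
by apply: ler_pM; [exact: sumr_ge0 | exact: sumr_ge0 | exact: IH | exact: gW].
Qed.

Lemma sum_sigrev_abs_le k u : a <= u -> u <= b ->
  \sum_(w : k.-tuple 'I_d) `|sigrev g a w u| <= W u ^+ k / (k`!)%:R.
Proof.
elim: k u => [|k IH] u h1 h2.
  rewrite expr0 fact0 divr1 (eq_bigr (fun=> 1)) => [|w _].
    by rewrite sumr_const card_tuple.
  by rewrite tuple0 normr1.
rewrite big_tuple_cons; have PF := partition_filter_proper h1.
apply: (@cvgr_le_frequently _ _ (partition_filter a u) _ (fun P =>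
  \sum_(c < d) \sum_(w : k.-tuple 'I_d) `|RS_sum_at (sigrev g a w) (coordp g c) P|)).
  apply: cvg_sumr => c; apply: cvg_sumr => w; apply: cvg_norm; apply/is_RS_cvg.
  exact: sigrev_is_RS.
(* the bound is only proved for left-point tags, which are frequent in the mesh filter *)
move=> A [dl dl0 HA]; have [m finP] := uniform_tpart_fine h1 dl0.
by exists (uniform_tpart a u m); [exact: HA | exact: sum_RS_sum_sigrev_le finP IH].
Qed.

End Signature.

(** * The signature kernel *)

Section DoubleSums.
Variables (R : realType) (d : nat).
Implicit Types (F : R -> R -> R) (g h : R -> 'rV[R]_d).

Definition RS2_sum_at F g h (PQ : tpart R * tpart R) : R :=
  \sum_(i < tp_len PQ.1) \sum_(j < tp_len PQ.2)
    F (tp_tag PQ.1 i) (tp_tag PQ.2 j) *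
    dotV (g (tp_pt PQ.1 i.+1) - g (tp_pt PQ.1 i))
      (h (tp_pt PQ.2 j.+1) - h (tp_pt PQ.2 j)).

Lemma is_RS2_cvg F g h a s c t I : is_RS2 F g h a s c t I <->
  RS2_sum_at F g h @ filter_prod (partition_filter a s) (partition_filter c t) --> I.
Proof.
split=> [H|/cvgrPdist_lt H].
  apply/cvgrPdist_lt => e e0; have [dl dl0 Hdl] := H e e0.
  exists ([set P | fine_partition a s dl P], [set Q | fine_partition c t dl Q]).
    by split; exists dl.
  by move=> [P Q] [/= finP finQ]; rewrite distrC; apply: Hdl.
move=> e e0; have [[A B] [[d1 d10 HA] [d2 d20 HB]] HAB] := H e e0.
have dl1 : Num.min d1 d2 <= d1 by rewrite ge_min lexx.
have dl2 : Num.min d1 d2 <= d2 by rewrite ge_min lexx orbT.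
exists (Num.min d1 d2) => [|n x xi m y eta finP finQ]; first by rewrite lt_min d10 d20.
rewrite distrC; apply: (HAB (TPart n x xi, TPart m y eta)); split.
  by apply: HA; apply: tagged_partition_mesh_le finP.
by apply: HB; apply: tagged_partition_mesh_le finQ.
Qed.

Lemma RS2_sum_at_sum (I : Type) (r : seq I) (F : I -> R -> R -> R) g h PQ :
  RS2_sum_at (fun u v => \sum_(i <- r) F i u v) g h PQ =
  \sum_(i <- r) RS2_sum_at (F i) g h PQ.
Proof.
rewrite /RS2_sum_at; under eq_bigr do under eq_bigr do rewrite mulr_suml.
by under eq_bigr do rewrite exchange_big /=; rewrite exchange_big.
Qed.

Lemma RS2_sum_atZ k F g h PQ :
  RS2_sum_at (fun u v => k * F u v) g h PQ = k * RS2_sum_at F g h PQ.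
Proof.
rewrite /RS2_sum_at mulr_sumr; apply: eq_bigr => i _.
by rewrite mulr_sumr; apply: eq_bigr => j _; rewrite mulrA.
Qed.

Lemma dotV_coordp g h u u' v v' : dotV (g u' - g u) (h v' - h v) =
  \sum_(c < d) (coordp g c u' - coordp g c u) * (coordp h c v' - coordp h c v).
Proof. by apply: eq_bigr => c _; rewrite !mxE. Qed.

End DoubleSums.

Section Kernel.
Variables (R : realType) (d : nat) (a b : R) (ga si : R -> 'rV[R]_d) (W : R -> R).
Hypotheses (ab : a <= b) (Wc : unif_cont_on a b W) (W0 : W a = 0)
  (gaW : path_controls a b ga W) (siW : path_controls a b si W).

Lemma sig_inner_sigrev k u v : sig_inner ga si a u v k =
  \sum_(w : k.-tuple 'I_d) sigrev ga a w u * sigrev si a w v.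
Proof.
rewrite /sig_inner (reindex (fun w : k.-tuple 'I_d => [tuple of rev w])) /=.
  by apply: eq_bigr => w _; rewrite /sig /= revK.
by exists (fun w : k.-tuple 'I_d => [tuple of rev w]) => w _;
  apply: val_inj; rewrite /= revK.
Qed.

Lemma sig_inner0 u v : sig_inner ga si a u v 0 = 1.
Proof.
rewrite sig_inner_sigrev (eq_bigr (fun=> 1)) => [|w _]; last by rewrite tuple0 mulr1.
by rewrite sumr_const card_tuple.
Qed.

Lemma sig_inner_abs_le k u v : a <= u -> u <= b -> a <= v -> v <= b ->
  `|sig_inner ga si a u v k| <= W u ^+ k / (k`!)%:R * (W v ^+ k / (k`!)%:R).
Proof.
move=> h1 h2 h3 h4; rewrite sig_inner_sigrev.
apply: le_trans (ler_norm_sum _ _ _) _; under eq_bigr do rewrite normrM.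
apply: le_trans (sum_mul_le_mul_sum _ _) _ => //.
by apply: ler_pM; [exact: sumr_ge0 | exact: sumr_ge0 | |];
  apply: (sum_sigrev_abs_le ab Wc W0).
Qed.

Lemma RS2_sum_at_sig_inner k PQ :
  RS2_sum_at (fun u v => sig_inner ga si a u v k) ga si PQ =
  \sum_(c < d) \sum_(w : k.-tuple 'I_d)
    RS_sum_at (sigrev ga a w) (coordp ga c) PQ.1 *
    RS_sum_at (sigrev si a w) (coordp si c) PQ.2.
Proof.
rewrite /RS2_sum_at /RS_sum_at /RS_sum; symmetry.
under eq_bigr do under eq_bigr do rewrite big_distrlr /=.
rewrite exchange_big /=; under eq_bigr do rewrite exchange_big /=.
under eq_bigr do under eq_bigr do rewrite exchange_big /=.
rewrite exchange_big /=; under eq_bigr do rewrite exchange_big /=.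
apply: eq_bigr => i _; apply: eq_bigr => j _.
rewrite sig_inner_sigrev dotV_coordp big_distrlr /=.
by apply: eq_bigr => w _; apply: eq_bigr => c _; ring.
Qed.

Lemma is_RS2_sig_inner k s t : a <= s -> s <= b -> a <= t -> t <= b ->
  is_RS2 (fun u v => sig_inner ga si a u v k) ga si a s a t (sig_inner ga si a s t k.+1).
Proof.
move=> h1 h2 h3 h4; apply/is_RS2_cvg; rewrite sig_inner_sigrev big_tuple_cons.
under eq_cvg do rewrite RS2_sum_at_sig_inner.
apply: cvg_sumr => c; apply: cvg_sumr => w; apply: cvgM.
  by apply: cvg_comp cvg_fst _; apply/is_RS_cvg; exact: (sigrev_is_RS ab Wc gaW).
by apply: cvg_comp cvg_snd _; apply/is_RS_cvg; exact: (sigrev_is_RS ab Wc siW).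
Qed.

Lemma RS2_sum_at_dist_le F G e dl s t P Q : s <= b -> t <= b ->
  fine_partition a s dl P -> fine_partition a t dl Q ->
  (forall u v, a <= u -> u <= s -> a <= v -> v <= t -> `|F u v - G u v| <= e) ->
  `|RS2_sum_at F ga si (P, Q) - RS2_sum_at G ga si (P, Q)| <= e * (W s * W t).
Proof.
move=> sb tb finP finQ FG; have [P0 [Pn HP]] := finP; have [Q0 [Qm HQ]] := finQ.
have Wst : W s * W t = \sum_(i < tp_len P) \sum_(j < tp_len Q)
    (W (tp_pt P i.+1) - W (tp_pt P i)) * (W (tp_pt Q j.+1) - W (tp_pt Q j)).
  rewrite -big_distrlr /= (sumr_telescope_ord (fun i => W (tp_pt P i))).
  rewrite (sumr_telescope_ord (fun j => W (tp_pt Q j))).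
  by rewrite Pn P0 Qm Q0 W0 !subr0.
rewrite Wst /RS2_sum_at -sumrB mulr_sumr.
apply: le_trans (ler_norm_sum _ _ _) _; apply: ler_sum => i _.
rewrite -sumrB mulr_sumr; apply: le_trans (ler_norm_sum _ _ _) _; apply: ler_sum => j _.
have /andP[xa _] := tagged_partition_pt_in finP (ltnW (ltn_ord i)).
have /andP[_ xs] := tagged_partition_pt_in finP (ltn_ord i).
have /andP[ya _] := tagged_partition_pt_in finQ (ltnW (ltn_ord j)).
have /andP[_ yt] := tagged_partition_pt_in finQ (ltn_ord j).
have [xx [t1 [t2 _]]] := HP i (ltn_ord i); have [yy [t3 [t4 _]]] := HQ j (ltn_ord j).
rewrite -mulrBl normrM; apply: ler_pM => //; first by apply: FG; lra.
rewrite dotV_coordp; apply: le_trans (ler_norm_sum _ _ _) _.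
under eq_bigr do rewrite normrM.
apply: le_trans (sum_mul_le_mul_sum _ _) _ => //.
by apply: ler_pM; [exact: sumr_ge0 | exact: sumr_ge0 | apply: gaW | apply: siW]; lra.
Qed.

(* [W u * W v <= W b ^ 2] on the square; the [+ 1] only makes [C] positive *)
Let C := W b ^+ 2 + 1.

Let C_gt0 : 0 < C.
Proof. by rewrite /C; have := sqr_ge0 (W b); lra. Qed.

Lemma sig_kernel_terms_abs_le psi k u v : a <= u -> u <= b -> a <= v -> v <= b ->
  `|sig_kernel_terms psi ga si a u v k| <= C ^+ k * `|psi k| / ((k`!)%:R ^+ 2).
Proof.
move=> h1 h2 h3 h4; rewrite /sig_kernel_terms normrM.
rewrite [X in _ <= X](_ : _ = `|psi k| * (C ^+ k / ((k`!)%:R ^+ 2))); last by ring.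
apply: ler_wpM2l => //; apply: le_trans (sig_inner_abs_le k h1 h2 h3 h4) _.
have Wu0 := control_ge0 W0 gaW h1 h2; have Wv0 := control_ge0 W0 gaW h3 h4.
have Wub := control_le gaW h1 h2 (lexx b); have Wvb := control_le gaW h3 h4 (lexx b).
rewrite mulrACA -invfM -expr2 -exprMn ler_wpM2r ?invr_ge0 ?exprn_ge0 //.
rewrite lerXn2r ?nnegrE ?mulr_ge0 ?(ltW C_gt0) // /C.
by have := ler_pM Wu0 Wv0 Wub Wvb; rewrite -expr2; lra.
Qed.

Lemma sig_kernel_terms_cvg psi u v : growth_cond psi ->
  a <= u -> u <= b -> a <= v -> v <= b ->
  cvgn (series (sig_kernel_terms psi ga si a u v)).
Proof.
move=> hpsi h1 h2 h3 h4.
exact: series_abs_cvg (fun k => sig_kernel_terms_abs_le psi k h1 h2 h3 h4) (hpsi C C_gt0).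
Qed.

Lemma is_RS2_partial_kernel phi N s t : a <= s -> s <= b -> a <= t -> t <= b ->
  is_RS2 (fun u v => series (sig_kernel_terms (phi_shift phi) ga si a u v) N)
    ga si a s a t (series (fun k => sig_kernel_terms phi ga si a s t k.+1) N).
Proof.
move=> h1 h2 h3 h4; apply/is_RS2_cvg.
rewrite (eq_cvg _ _ (RS2_sum_at_sum (index_iota 0 N)
  (fun k u v => sig_kernel_terms (phi_shift phi) ga si a u v k) ga si)).
apply: cvg_sumr => k.
rewrite /sig_kernel_terms.
rewrite (eq_cvg _ _ (RS2_sum_atZ (phi k.+1) (fun u v => sig_inner ga si a u v k) ga si)).
by apply: cvgMl_tmp; apply/is_RS2_cvg; exact: is_RS2_sig_inner.
Qed.

Lemma is_RS2_sig_kernel phi s t : growth_cond phi -> growth_cond (phi_shift phi) ->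
  a <= s -> s <= b -> a <= t -> t <= b ->
  exists I, is_RS2 (fun u v => sig_kernel (phi_shift phi) ga si a u v) ga si a s a t I /\
    sig_kernel phi ga si a s t = phi 0%N + I.
Proof.
move=> hphi hphi1 h1 h2 h3 h4.
set U := sig_kernel_terms phi ga si a s t.
have U0 : U 0%N = phi 0%N by rewrite /U /sig_kernel_terms sig_inner0 mulr1.
have shiftU : series (fun k => U k.+1) = fun N => series U N.+1 - U 0%N.
  by apply/funext => N; rewrite /series /= big_nat_recl //= addrC addKr.
have cV : series (fun k => U k.+1) @ \oo --> limn (series U) - phi 0%N.
  rewrite shiftU -U0; apply: cvgB; last exact: cvg_cst.
  by rewrite cvg_shiftS; apply: sig_kernel_terms_cvg.
exists (limn (series U) - phi 0%N); split; last by rewrite /sig_kernel -/U; ring.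
pose m k := C ^+ k * `|phi_shift phi k| / ((k`!)%:R ^+ 2).
have cm : cvgn (series m) := hphi1 C C_gt0.
apply/is_RS2_cvg; apply: (cvg_uniform_approx
  (A_ := fun N =>
     RS2_sum_at (fun u v => series (sig_kernel_terms (phi_shift phi) ga si a u v) N) ga si)
  (eps := fun N => (limn (series m) - series m N) * (W s * W t)) _ cV).
- by move=> N; apply/is_RS2_cvg; apply: is_RS2_partial_kernel.
- rewrite -(mul0r (W s * W t)) -(subrr (limn (series m))).
  by apply: cvgMr_tmp; apply: cvgB => //; exact: cvg_cst.
move=> N; exists ([set P | fine_partition a s 1 P], [set Q | fine_partition a t 1 Q]).
  by split; exists 1 => //; exact: ltr01.
move=> [P Q] [/= finP finQ]; apply: RS2_sum_at_dist_le finP finQ _ => // u v *.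
by apply: series_tail_abs_le cm => k; apply: sig_kernel_terms_abs_le; lra.
Qed.

End Kernel.

(** * A common control from total variation *)

Section Control.
Variable R : realType.
Implicit Types (a b : R) (f : R -> R).

Lemma continuous_unif_cont_on a b f : {within `[a, b], continuous f} -> unif_cont_on a b f.
Proof.
move=> /subspace_continuousP fc e e0; have e20 : 0 < e / 2 by rewrite divr_gt0.
have cov := (compact_near_coveringP `[a, b]).1 (@segment_compact R a b).
pose P dl x := `[a, b]%classic x -> forall y, `[a, b]%classic y ->
  `|x - y| < dl -> `|f x - f y| <= e.
have : \forall dl \near (0 : R)^'+, `[a, b]%classic `<=` P dl.
  apply: cov => x Kx; move/cvgrPdist_le: (fc x Kx) => /(_ _ e20).
  case/nbhs_ballP => eta /= eta0 Heta; have eta20 : 0 < eta / 2 by rewrite divr_gt0.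
  near=> x' dl => Kx' y Ky hy.
  have h1 : `|x - x'| < eta / 2.
    by near: x'; have := near_ball x (eta / 2) eta20; rewrite -ball_normE.
  have h2 : dl < eta / 2 by near: dl; apply: nbhs_right_lt.
  have hy' : `|x - y| < eta.
    apply: le_lt_trans (ler_distD x' _ _) _; rewrite (splitr eta).
    by apply: ltrD => //; exact: lt_trans hy h2.
  have A1 : `|f x - f y| <= e / 2 by apply: Heta => //; rewrite -ball_normE.
  have A2 : `|f x - f x'| <= e / 2.
    apply: Heta => //; rewrite -ball_normE /=.
    by apply: lt_trans h1 _; rewrite ltr_pdivrMr //; lra.
  by apply: le_trans (ler_distD (f x) _ _) _; rewrite distrC (splitr e); lra.
move=> H; have [dl [dl0 Hdl]] := filter_ex (filterI (nbhs_right_gt 0) H).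
exists dl => // u v h1 h2 h3 h4 huv.
by apply: Hdl => //=; rewrite in_itv /=; apply/andP.
Unshelve. all: by end_near.
Qed.

Lemma unif_cont_on_degenerate a b f : b <= a -> unif_cont_on a b f.
Proof.
move=> ba e e0; exists 1 => // u v *.
by rewrite (_ : u = v) ?subrr ?normr0 ?ltW //; lra.
Qed.

Lemma total_variation_controls a b f : bounded_variation a b f ->
  controls a b f (fun t => fine (total_variation a t f)).
Proof.
move=> bv u v h1 h2 h3; have av : a <= v by lra.
have bav := bounded_variationl av h3 bv.
have fau := (bounded_variationP f h1).1 (bounded_variationl h1 h2 bav).
have fuv := (bounded_variationP f h2).1 (bounded_variationr h1 h2 bav).
rewrite (total_variationD f h1 h2) fineD // addrAC subrr add0r.
by rewrite -lee_fin fineK //; apply: total_variation_ge.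
Qed.

Lemma coordp_continuous_within d a b (g : R -> 'rV[R]_d) c :
  {within `[a, b], continuous g} -> {within `[a, b], continuous (coordp g c)}.
Proof.
move=> gc x; apply: (continuous_comp (f := from_subspace `[a, b] g)
  (g := fun M : 'rV[R]_d => M 0 c)); [exact: gc | exact: coord_continuous].
Qed.

Lemma exists_common_control d a b (ga si : R -> 'rV[R]_d) : a <= b ->
  {within `[a, b], continuous ga} -> {within `[a, b], continuous si} ->
  (forall c, bounded_variation a b (coordp ga c)) ->
  (forall c, bounded_variation a b (coordp si c)) ->
  exists W, [/\ unif_cont_on a b W, W a = 0,
    path_controls a b ga W & path_controls a b si W].
Proof.
move=> ab gac sic gabv sibv.
pose V (h : R -> 'rV[R]_d) c t := fine (total_variation a t (coordp h c)).
have Vctrl h c : bounded_variation a b (coordp h c) -> controls a b (coordp h c) (V h c).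
  exact: total_variation_controls.
have Vcont h c : a < b -> {within `[a, b], continuous h} ->
    bounded_variation a b (coordp h c) -> {within `[a, b], continuous (V h c)}.
  move=> lt_ab hc hbv; apply: total_variation_continuous => //.
  exact: coordp_continuous_within.
exists (fun t => \sum_(c < d) (V ga c t + V si c t)); split.
- case: (ltP a b) => [lt_ab|ba]; last exact: unif_cont_on_degenerate.
  apply: continuous_unif_cont_on; apply: continuous_big => [|c _ x]; first exact: add_continuous.
  by apply: continuousD; [apply: Vcont | apply: Vcont].
- by rewrite big1 // => c _; rewrite /V !total_variationxx addr0.
- move=> u v h1 h2 h3; rewrite -sumrB; apply: ler_sum => c _.
  have := Vctrl ga c (gabv c) u v h1 h2 h3.
  by have := controls_ge0 (Vctrl si c (sibv c)) h1 h2 h3; lra.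
move=> u v h1 h2 h3; rewrite -sumrB; apply: ler_sum => c _.
have := Vctrl si c (sibv c) u v h1 h2 h3.
by have := controls_ge0 (Vctrl ga c (gabv c)) h1 h2 h3; lra.
Qed.

End Control.

Unset Implicit Arguments.

Theorem mainTheorem4 (R : realType) (d : nat) (a b : R)
  (gamma sigma : R -> 'rV[R]_d) (phi : nat -> R)
  (gamma_cont : {within `[a, b], continuous gamma})
  (sigma_cont : {within `[a, b], continuous sigma})
  (gamma_bv : forall c : 'I_d, bounded_variation a b (coordp gamma c))
  (sigma_bv : forall c : 'I_d, bounded_variation a b (coordp sigma c))
  (hphi : growth_cond phi) (hphi1 : growth_cond (phi_shift phi)) :
  (forall s t, s \in `[a, b] -> t \in `[a, b] ->
     cvgn (series (sig_kernel_terms phi gamma sigma a s t)) /\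
     cvgn (series (sig_kernel_terms (phi_shift phi) gamma sigma a s t))) /\
  (forall s t, s \in `[a, b] -> t \in `[a, b] ->
     exists I : R,
       is_RS2 (fun u v => sig_kernel (phi_shift phi) gamma sigma a u v)
              gamma sigma a s a t I /\
       sig_kernel phi gamma sigma a s t = phi 0%N + I).
Proof.
have [ab|ba] := leP a b; last by split=> s t; rewrite !in_itv /= => /andP[? ?]; lra.
have [W [Wc W0 gammaW sigmaW]] :=
  exists_common_control ab gamma_cont sigma_cont gamma_bv sigma_bv.
split=> s t; rewrite !in_itv /= => /andP[hs hs'] /andP[ht ht'].
  by split; apply: (sig_kernel_terms_cvg ab Wc W0 gammaW sigmaW).
exact: (is_RS2_sig_kernel ab Wc W0 gammaW sigmaW).
Qed.
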